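(* Let $n\le -1$ be an odd integer. In $\mathbb{F}_2[w]$ one has $$q_n(w)\equiv (w+1)^e\,h(w)\pmod 2,$$ where $e=0$ if $3\nmid n$ and $e=2$ if $3\mid n$, and $h\in\mathbb{F}_2[w]$ is a product of pairwise distinct irreducible polynomials each of degree at least $2$ (so $h$ is squarefree and divisible by neither $w$ nor $w+1$).
   Context: Define $q_n\in\mathbb{Z}[w]$ for odd $n\le -1$ by $q_{-1}=w^3-w^2+2w-7$, $q_{-3}=w^5-2w^4-2w^3+5w^2+3w-9$, $q_{-5}=w^7-2w^6-4w^5+8w^4+4w^3-7w^2+2w-7$, and $q_n=(w^2-1)(q_{n+2}-q_{n+4})+q_{n+6}$ for odd $n<-5$. *)

From HB Require Import structures.
From mathcomp Require Import all_boot all_order all_algebra.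
Set Implicit Arguments. Unset Strict Implicit. Unset Printing Implicit Defensive.
Import Order.TTheory GRing.Theory Num.Theory.
Local Open Scope ring_scope.

Definition q_m1 : {poly int} := 'X^3 - 'X^2 + 2%:P * 'X - 7%:P.
Definition q_m3 : {poly int} :=
  'X^5 - 2%:P * 'X^4 - 2%:P * 'X^3 + 5%:P * 'X^2 + 3%:P * 'X - 9%:P.
Definition q_m5 : {poly int} :=
  'X^7 - 2%:P * 'X^6 - 4%:P * 'X^5 + 8%:P * 'X^4 + 4%:P * 'X^3
  - 7%:P * 'X^2 + 2%:P * 'X - 7%:P.

(* qtrip k = (q_{-(2k+1)}, q_{-(2k+3)}, q_{-(2k+5)}) *)
Fixpoint qtrip (k : nat) : {poly int} * {poly int} * {poly int} :=
  match k with
  | 0%N => (q_m1, q_m3, q_m5)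
  | k'.+1 => let: (a, b, c) := qtrip k' in
             (b, c, ('X^2 - 1) * (c - b) + a)
  end.

Definition Q (k : nat) : {poly int} := (qtrip k).1.1.

(* q_n for odd n <= -1 : n = -(2k+1), k = (|n| - 1)/2 *)
Definition q (n : int) : {poly int} := Q ((`|n|%N).-1./2).

Definition red2 (p : {poly int}) : {poly 'F_2} := map_poly (fun z : int => z%:~R) p.

(* Let b_j be the Fibonacci polynomials over F_2 (b_0 = 0, b_1 = 1,
   b_(j+2) = X b_(j+1) + b_j).  In characteristic 2 squaring is additive, so
   b_(j+2)^2 = X^2 b_(j+1)^2 + b_j^2; with this, the recurrence defining q_n
   becomes an identity for  Qbar k = (X+1)^2 + X b_(k+2)^2,  and comparing
   the three seeds gives  q_(-(2k+1)) = Qbar k  mod 2.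

   Squarefreeness comes from an Euler-type identity: if a' = s' = 0 and
   h = a + X s, then h + X h' = a in characteristic 2.  Hence if h is coprime
   to a, it is coprime to X h', i.e. separable with h(0) <> 0.  A separable
   polynomial over a finite field is a product of distinct irreducibles, and
   when it has no root in F_2 none of them is linear.

   Finally b_j(1) = 0 exactly when 3 | j, and then (X+1)^2 divides b_j.
   If 3 does not divide j we take a = (X+1)^2, coprime to h since
   h(1) = b_j(1)^2 = 1; if 3 | j we pull (X+1)^2 out of h and take a = 1.
   The index j = k + 2 attached to n = -(2k+1) satisfies 3 | j iff 3 | n. *)

From HB Require Import structures.
From mathcomp Require Import all_boot all_order all_algebra.
From mathcomp Require Import separable ring.
Import Order.TTheory GRing.Theory Num.Theory.
Local Open Scope ring_scope.

Lemma separable_euler (R : idomainType) (h : {poly R}) :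
  coprimep h (h + 'X * h^`()) -> separable_poly h /\ ~~ root h 0.
Proof.
rewrite -{2}[h]mul1r coprimep_addl_mul coprimepMr coprimepX => /andP[h0 cop].
by split=> //; rewrite separable_poly.unlock.
Qed.

Lemma root_of_linear_divisor (F : fieldType) (p g : {poly F}) :
  size p = 2 -> p %| g -> exists x, root g x.
Proof.
move=> /poly2_root [x px] p_dvd_g; exists x.
by rewrite -dvdp_XsubCl (dvdp_trans _ p_dvd_g) // dvdp_XsubCl.
Qed.

Section FiniteFieldFactorization.
Variable F : finFieldType.

(* Over a finite field irreducibility is decidable (irreducibleP), so a
   reducible polynomial exhibits a proper divisor of smaller size. *)
Lemma irreducible_divisor (g : {poly F}) :
  (1 < size g)%N -> exists2 p, irreducible_poly p & p %| g.
Proof.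
have [n] := ubnP (size g); elim: n g => // n IHn g /ltnSE size_g g_gt1.
have [irr_g|] := boolP (irreducibleb g); first by exists g => //; apply/irreducibleP.
rewrite /irreducibleb g_gt1 negb_forall => /existsP[q].
rewrite negb_imply -ltnNge -dvdpE => /andP[q_dvd_g q_gt1].
have q_lt_g : (size q < size g)%N.
  by rewrite (leq_ltn_trans (size_npoly q)) // prednK // ltnW.
have [p irr_p p_dvd_q] := IHn q (leq_trans q_lt_g size_g) q_gt1.
by exists p => //; apply: dvdp_trans q_dvd_g.
Qed.

Lemma separable_factorization (g : {poly F}) : separable_poly g ->
  exists s : seq {poly F},
    [/\ uniq s, {in s, forall p, irreducible_poly p} & g %= \prod_(p <- s) p].
Proof.
have [n] := ubnP (size g); elim: n g => // n IHn g /ltnSE size_g sep_g.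
have g_neq0 := separable_poly_neq0 sep_g.
have [g_le1|g_gt1] := leqP (size g) 1.
  exists [::]; split=> //.
  by rewrite big_nil -size_poly_eq1 eqn_leq g_le1 size_poly_gt0.
have [p irr_p p_dvd_g] := irreducible_divisor _ g_gt1.
have p_neq0 := irredp_neq0 irr_p.
have def_g : g = g %/ p * p by rewrite divpK.
move: (sep_g); rewrite {1}def_g separable_mul => /and3P[sep_gp _ cop_gp].
have size_gp : (size (g %/ p)%R < n)%N.
  rewrite size_divp // (leq_trans _ size_g) // ltn_subrL size_poly_gt0 g_neq0.
  by rewrite andbT -subn1 subn_gt0 irr_p.1.
have [s [uniq_s irr_s def_gp]] := IHn _ size_gp sep_gp.
exists (p :: s); split.
- rewrite /= uniq_s andbT; apply: contraTN cop_gp => p_in_s.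
  have p_dvd_gp : p %| g %/ p.
    by rewrite (eqp_dvdr _ def_gp) (big_rem p p_in_s) dvdp_mulIl.
  apply/negP => /(coprimep_dvdr p_dvd_gp).
  by rewrite coprimepp; case: irr_p => /gtn_eqF->.
- by move=> r; rewrite inE => /predU1P[->|/irr_s].
- by rewrite big_cons mulrC {1}def_g eqp_mulr.
Qed.

End FiniteFieldFactorization.

Notation F2poly := {poly 'F_2}.

Lemma F2_cases (x : 'F_2) : x = 0 \/ x = 1.
Proof. by case: x => -[|[|m]] // x_lt2; [left|right]; apply: val_inj. Qed.

Lemma F2_add11 : (1 + 1 : 'F_2) = 0.
Proof. exact/eqP. Qed.

(* Over F_2 the only nonzero constant is 1, so associates are equal. *)
Lemma eqp_F2 (p r : F2poly) : p %= r -> p = r.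
Proof.
have nz1 (c : 'F_2) : c != 0 -> c = 1 by case: (F2_cases c) => ->.
by case/eqpP=> -[a c] /= /andP[/nz1-> /nz1->]; rewrite !scale1r.
Qed.

Definition distinct_nonlinear_irreducibles (s : seq F2poly) : Prop :=
  uniq s /\ forall p, p \in s -> irreducible_poly p /\ (2 <= (size p).-1)%N.

Lemma F2_factorization (g : F2poly) :
  separable_poly g -> ~~ root g 0 -> ~~ root g 1 ->
  exists2 s, distinct_nonlinear_irreducibles s & g = \prod_(p <- s) p.
Proof.
move=> sep_g g0 g1.
have [s [uniq_s irr_s /eqp_F2 def_g]] := separable_factorization _ _ sep_g.
exists s => //; split=> // p p_in_s; have irr_p := irr_s p p_in_s.
split=> //; have p_dvd_g : p %| g by rewrite def_g (big_rem p p_in_s) dvdp_mulIl.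
have : size p != 2.
  apply/eqP => /root_of_linear_divisor/(_ p_dvd_g)[x].
  by case: (F2_cases x) => ->; apply/negP.
by case: irr_p; case: (size p) => [|[|[|]]].
Qed.

(* Characteristic 2 arithmetic in F_2[X].  The tactic ring works in
   characteristic 0, so an identity mod 2 is checked by exhibiting the
   difference as twice an explicit polynomial (eq_mod2). *)
Lemma char2 : (2%:R : F2poly) = 0.
Proof. by rewrite -polyC_natr; apply/eqP; rewrite polyC_eq0. Qed.

Lemma eq_mod2 (c a b : F2poly) : a = b + 2%:R * c -> a = b.
Proof. by rewrite char2 mul0r addr0. Qed.

Lemma oppF2 (x : F2poly) : - x = x.
Proof. by apply: (eq_mod2 (- x)); ring. Qed.

Lemma sqrD_F2 (x y : F2poly) : (x + y) ^+ 2 = x ^+ 2 + y ^+ 2.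
Proof. by apply: (eq_mod2 (x * y)); ring. Qed.

Lemma deriv_sqr_F2 (p : F2poly) : (p ^+ 2)^`() = 0.
Proof. by rewrite deriv_exp -mulr_natr char2 mulr0. Qed.

Lemma euler_F2 (a s : F2poly) : a^`() = 0 -> s^`() = 0 ->
  (a + 'X * s) + 'X * (a + 'X * s)^`() = a.
Proof.
move=> da ds; rewrite derivD derivM derivX da ds.
by apply: (eq_mod2 ('X * s)); ring.
Qed.

Lemma char2_factorization (a s : F2poly) : a^`() = 0 -> s^`() = 0 ->
  coprimep (a + 'X * s) a -> ~~ root (a + 'X * s) 1 ->
  exists2 t, distinct_nonlinear_irreducibles t & a + 'X * s = \prod_(p <- t) p.
Proof.
move=> da ds cop h1.
have := @separable_euler _ (a + 'X * s); rewrite euler_F2 // => /(_ cop)[sep h0].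
exact: F2_factorization.
Qed.

Fixpoint fib (j : nat) : F2poly :=
  match j with
  | 0%N => 0
  | 1%N => 1
  | (j'.+1 as j1).+1 => 'X * fib j1 + fib j'
  end.

Lemma fibSS j : fib j.+2 = 'X * fib j.+1 + fib j.
Proof. by []. Qed.

Lemma fib_sqr_rec j : fib j.+2 ^+ 2 = 'X ^+ 2 * fib j.+1 ^+ 2 + fib j ^+ 2.
Proof. by rewrite fibSS sqrD_F2 exprMn. Qed.

Lemma fib_step3 j : fib j.+3 = ('X + 1) ^+ 2 * fib j.+1 + 'X * fib j.
Proof. by rewrite !fibSS sqrD_F2 expr1n; ring. Qed.

(* Since (X+1)^2 vanishes at 1, b_j(1) is 3-periodic: 0, 1, 1, ... *)
Lemma fib_at1 k r : (fib (k * 3 + r)).[1] = (fib r).[1].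
Proof.
elim: k => [|k IHk]; first by rewrite mul0n.
by rewrite mulSnr addnAC addn3 fib_step3 !hornerE F2_add11 expr2 !mul0r add0r.
Qed.

Lemma fib_noroot1 j : ~~ (3 %| j)%N -> ~~ root (fib j) 1.
Proof.
rewrite /root (divn_eq j 3) fib_at1 /dvdn modnMDl.
by case: (j %% 3)%N (ltn_pmod j (isT : (0 < 3)%N)) => [|[|[|]]] //= _ _;
  rewrite !hornerE ?oner_neq0.
Qed.

Lemma fib_dvd j : (3 %| j)%N -> ('X + 1) ^+ 2 %| fib j.
Proof.
case/dvdnP=> k ->; elim: k => [|k IHk]; first exact: dvdp0.
rewrite mulSnr addn3 fib_step3.
by apply: dvdp_add; [exact: dvdp_mulIl | exact: dvdp_mull].
Qed.

(* The reduction of q_(-(2k+1)) modulo 2. *)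
Definition Qbar (k : nat) : F2poly := ('X + 1) ^+ 2 + 'X * fib k.+2 ^+ 2.

Lemma Qbar_rec k : Qbar k.+3 = ('X ^+ 2 - 1) * (Qbar k.+2 - Qbar k.+1) + Qbar k.
Proof.
rewrite /Qbar (fib_sqr_rec k.+3) (fib_sqr_rec k.+2).
by apply: (eq_mod2 ('X ^+ 3 * fib k.+3 ^+ 2)); ring.
Qed.

Lemma red2D p r : red2 (p + r) = red2 p + red2 r. Proof. exact: rmorphD. Qed.
Lemma red2N p : red2 (- p) = - red2 p. Proof. exact: rmorphN. Qed.
Lemma red2M p r : red2 (p * r) = red2 p * red2 r. Proof. exact: rmorphM. Qed.
Lemma red21 : red2 1 = 1. Proof. exact: rmorph1. Qed.
Lemma red2X : red2 'X = 'X. Proof. exact: map_polyX. Qed.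
Lemma red2Xn n : red2 'X^n = 'X^n. Proof. exact: map_polyXn. Qed.
Lemma red2C (m : nat) : red2 (Posz m)%:P = m%:R.
Proof. by rewrite /red2 map_polyC /= pmulrn polyC_natr. Qed.

Definition red2E := (red2C, red2D, red2N, red2M, red21, red2X, red2Xn).

Lemma red2_seeds :
  [/\ red2 q_m1 = Qbar 0, red2 q_m3 = Qbar 1 & red2 q_m5 = Qbar 2].
Proof.
rewrite /q_m1 /q_m3 /q_m5 /Qbar !red2E /=; split.
- by apply: (eq_mod2 (- 'X ^+ 2 - 4%:R)); ring.
- by apply: (eq_mod2 (- 'X ^+ 4 - 2%:R * 'X ^+ 3 + 2%:R * 'X ^+ 2 - 5%:R)); ring.
- apply: (eq_mod2 (- 'X ^+ 6 - 4%:R * 'X ^+ 5 + 4%:R * 'X ^+ 4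
                   - 4%:R * 'X ^+ 2 - 4%:R)).
  by ring.
Qed.

Lemma red2_qtrip k : [/\ red2 (qtrip k).1.1 = Qbar k,
  red2 (qtrip k).1.2 = Qbar k.+1 & red2 (qtrip k).2 = Qbar k.+2].
Proof.
elim: k => [|k IHk] /=; first exact: red2_seeds.
move: IHk; case: (qtrip k) => [[a b] c] /= [red_a red_b red_c]; split=> //.
by rewrite Qbar_rec !red2E red_a red_b red_c.
Qed.

Lemma red2Q k : red2 (Q k) = Qbar k.
Proof. by rewrite /Q; case: (red2_qtrip k). Qed.

(* Since X + 1 vanishes at 1, so does (X+1)^2 + X b^2 exactly when b does. *)
Lemma root1_shape (b : F2poly) : root (('X + 1) ^+ 2 + 'X * b ^+ 2) 1 = root b 1.
Proof. by rewrite /root !hornerE F2_add11 expr2 !mul0r add0r sqrf_eq0. Qed.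

Lemma Qbar_factorization k :
  exists2 s, distinct_nonlinear_irreducibles s &
    Qbar k = ('X + 1) ^+ (if (3 %| k.+2)%N then 2 else 0) * \prod_(p <- s) p.
Proof.
rewrite /Qbar; set b := fib k.+2.
have [d3|nd3] := boolP (3 %| k.+2)%N.
- have /dvdpP[e def_b] := fib_dvd _ d3.
  have [||||s s_ok def_h] := char2_factorization 1 ((e * ('X + 1)) ^+ 2).
  + by rewrite -polyC1 derivC.
  + exact: deriv_sqr_F2.
  + exact: coprimep1.
  + by rewrite /root !hornerE F2_add11 !(mulr0, expr0n, addr0) oner_neq0.
  by exists s => //; rewrite -def_h /b def_b; ring.
- have [||||s s_ok def_h] := char2_factorization (('X + 1) ^+ 2) (b ^+ 2).
  + exact: deriv_sqr_F2.
  + exact: deriv_sqr_F2.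
  + apply: coprimep_expr.
    have X1 : 'X + 1 = 'X - 1%:P :> F2poly by rewrite polyC1 oppF2.
    by rewrite [X in coprimep _ X]X1 coprimep_XsubC root1_shape fib_noroot1.
  + by rewrite root1_shape fib_noroot1.
  by exists s => //; rewrite mul1r.
Qed.

Lemma dvd3_index (n : int) : ~~ (2 %| n)%Z ->
  (3 %| n)%Z = (3 %| ((`|n|%N).-1./2).+2)%N.
Proof.
rewrite !dvdzE /=; move: (`|n|%N) => m; rewrite dvdn2 negbK => odd_m.
have -> : m = (m./2).*2.+1 by rewrite -{1}(odd_double_half m) odd_m.
rewrite /= doubleK -(@dvdn_addl 3 3 (m./2).*2.+1) //.
have -> : ((m./2).*2.+1 + 3 = 2 * (m./2).+2)%N by rewrite -mul2n !mulnS !addnS addn0.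
by rewrite Gauss_dvdr.
Qed.

Theorem proposition4p1 (n : int) (hn : n <= -1) (hodd : ~~ (2 %| n)%Z) :
  exists s : seq {poly 'F_2},
    [/\ uniq s,
        (forall p, p \in s -> irreducible_poly p /\ (2 <= (size p).-1)%N) &
        red2 (q n) = ('X + 1) ^+ (if (3 %| n)%Z then 2 else 0) * \prod_(p <- s) p].
Proof.
have [s [uniq_s irr_s] red_q] := Qbar_factorization (`|n|%N.-1./2).
by exists s; split; rewrite // /q red2Q red_q dvd3_index.
Qed.
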